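(* For every integer $n\geq2$, $\mathcal{M}^{\perp}\cap HC(W_n^{*})=\varnothing$.
   Context: $H^2$ denotes the Hardy space of analytic functions $f(z)=\sum_{j\ge0}\hat f(j)z^j$ on the open unit disk $\mathbb{D}$ with $\sum_{j}|\hat f(j)|^2<\infty$. For $n\in\mathbb{N}$, $W_n$ is the bounded operator on $H^2$ given by $W_nf(z)=(1+z+\cdots+z^{n-1})f(z^n)$, $W_n^{*}$ is its adjoint, and $HC(W_n^{*})$ is the set of vectors with dense orbit under $W_n^{*}$. For each integer $k\geq2$, $h_k(z)=\frac{1}{1-z}\log\left(\frac{1+z+\cdots+z^{k-1}}{k}\right)$ (holomorphic branch of the logarithm on $\mathbb{D}$, real at $z=0$), which lies in $H^2$; $\mathcal{M}=\mathrm{span}\{h_k-h_\ell:k,\ell\geq2\}$ and $\mathcal{M}^\perp$ is its orthogonal complement in $H^2$. *)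

From Stdlib Require Import Reals.
From Coquelicot Require Import Coquelicot.
Open Scope R_scope.

(* H^2 is identified (isometrically) with l^2(N; C) via Taylor coefficients:
   f(z) = sum_j f_j z^j  <->  the sequence (f_j)_j. *)
Definition seqC := nat -> C.

Definition inH2 (a : seqC) : Prop := ex_series (fun j => (Cmod (a j)) ^ 2).

Definition ip (a b : seqC) : C :=
  (Series (fun j => Re (Cmult (a j) (Cconj (b j)))),
   Series (fun j => Im (Cmult (a j) (Cconj (b j))))).

Definition normsq (a : seqC) : R := Series (fun j => (Cmod (a j)) ^ 2).

(* W_n f(z) = (1 + z + ... + z^(n-1)) f(z^n): the coefficient of z^m is
   \hat f (m div n). *)
Definition Wn (n : nat) (a : seqC) : seqC := fun m => a (Nat.div m n).

Definition preserves_H2 (S : seqC -> seqC) : Prop :=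
  forall a, inH2 a -> inH2 (S a).
Definition is_adjoint_of (T S : seqC -> seqC) : Prop :=
  forall a b, inH2 a -> inH2 b -> ip (S a) b = ip a (T b).

Definition hypercyclic (S : seqC -> seqC) (x : seqC) : Prop :=
  inH2 x /\
  forall y, inH2 y -> forall eps, 0 < eps ->
    exists m : nat, normsq (fun j => Cminus (Nat.iter m S x j) (y j)) < eps.

(* Taylor coefficients of h_k(z) = (1/(1-z)) log((1+z+...+z^(k-1))/k).
   Since (1+...+z^(k-1))/k = (1-z^k)/(k(1-z)), with the principal branch
   (real at 0):  log(...) = -ln k + sum_{m>=1} z^m/m - sum_{m>=1} z^(k m)/m,
   whose m-th coefficient is logcoef k m below; dividing by (1-z) takes
   partial sums. *)
Definition logcoef (k m : nat) : R :=
  match m with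
  | O => - ln (INR k)
  | S _ => / INR m - (if Nat.eqb (Nat.modulo m k) 0 then INR k / INR m else 0)
  end.
Definition hcoef (k j : nat) : R := sum_f_R0 (logcoef k) j.
Definition h (k : nat) : seqC := fun j => RtoC (hcoef k j).

Fixpoint csum (N : nat) (F : nat -> C) : C :=
  match N with
  | O => RtoC 0
  | S N' => Cplus (csum N' F) (F N')
  end.

Definition inM (g : seqC) : Prop :=
  exists (N : nat) (ks ls : nat -> nat) (c : nat -> C),
    (forall i, (i < N)%nat -> (2 <= ks i)%nat /\ (2 <= ls i)%nat) /\
    g = (fun j => csum N (fun i => Cmult (c i) (Cminus (h (ks i) j) (h (ls i) j)))).

Definition inMperp (f : seqC) : Prop :=
  inH2 f /\ forall g, inM g -> ip f g = RtoC 0.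

From Stdlib Require Import Reals Lra Lia FunctionalExtensionality.
From Coquelicot Require Import Coquelicot.
Open Scope R_scope.

(* Write P_k(z) = 1 + z + ... + z^(k-1).  Since P_(kn)(z)/(kn) = (P_k(z^n)/k) (P_n(z)/n)
   and P_n(z)/(1 - z^n) = 1/(1 - z), one gets W_n h_k = h_(kn) - h_n.  Hence W_n maps M
   into M, and M^perp is invariant under the adjoint W_n^*.  By Pythagoras an orbit lying
   in M^perp stays at distance at least ||y|| from every y in M, and M <> 0 because
   h_2 - h_3 has constant coefficient ln 3 - ln 2; so the orbit is not dense.
   On coefficients everything follows from the closed form
   hcoef k j = - ln k + H_j - H_(j / k) (H the harmonic numbers), which also bounds
   |hcoef k j| by 2k/(j+1) and so shows h_k in H^2. *)

Lemma ln_le_sub1 (x : R) : 0 < x -> ln x <= x - 1.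
Proof.
  intros Hx. destruct (Req_dec (ln x) 0) as [E | E].
  - rewrite E. assert (x = 1) by (rewrite <- (exp_ln x Hx), E; apply exp_0). lra.
  - pose proof (exp_ineq1 _ E) as Hexp. rewrite exp_ln in Hexp by exact Hx. lra.
Qed.

Lemma ln_div_bounds (a b : R) : 0 < a -> 0 < b -> (a - b) / a <= ln (a / b) <= (a - b) / b.
Proof.
  intros Ha Hb. split.
  - assert (Hba := ln_le_sub1 (b / a) ltac:(apply Rdiv_lt_0_compat; lra)).
    rewrite ln_div in * by lra.
    replace ((a - b) / a) with (- (b / a - 1)) by (field; lra). lra.
  - eapply Rle_trans; [apply ln_le_sub1, Rdiv_lt_0_compat; lra |].
    right. field. lra.
Qed.

Lemma ln_succ_bounds (m : R) : 0 < m -> / (m + 1) <= ln (m + 1) - ln m <= / m.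
Proof.
  intros Hm. rewrite <- ln_div by lra.
  destruct (ln_div_bounds (m + 1) m) as [Hlow Hup]; [lra | lra |].
  replace ((m + 1 - m) / (m + 1)) with (/ (m + 1)) in Hlow by (field; lra).
  replace ((m + 1 - m) / m) with (/ m) in Hup by (field; lra).
  lra.
Qed.

Fixpoint harmonic (j : nat) : R :=
  match j with O => 0 | S i => harmonic i + / INR (S i) end.

Lemma harmonic_sub_bounds (q d : nat) : (1 <= q)%nat ->
  ln (INR (q + d) + 1) - ln (INR q + 1) <= harmonic (q + d) - harmonic q
  <= ln (INR (q + d)) - ln (INR q).
Proof.
  intros Hq. induction d as [| d IH].
  - rewrite Nat.add_0_r. lra.
  - replace (q + S d)%nat with (S (q + d)) by lia. cbn [harmonic]. rewrite S_INR.
    assert (Hm : 1 <= INR (q + d)) by (apply (le_INR 1); lia).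
    pose proof (ln_succ_bounds (INR (q + d)) ltac:(lra)).
    pose proof (ln_succ_bounds (INR (q + d) + 1) ltac:(lra)).
    lra.
Qed.

Lemma hcoef_harmonic (k j : nat) : (1 <= k)%nat ->
  hcoef k j = - ln (INR k) + harmonic j - harmonic (j / k).
Proof.
  intros Hk. induction j as [| j IH].
  - rewrite Nat.Div0.div_0_l. unfold hcoef. simpl. lra.
  - unfold hcoef in *. cbn [sum_f_R0 harmonic]. rewrite IH. unfold logcoef.
    assert (Hdiv := Nat.div_mod_eq (S j) k).
    destruct (Nat.eqb_spec (S j mod k) 0) as [E | E].
    + assert (Hq : (S j / k = S (j / k))%nat).
      { rewrite E, Nat.add_0_r in Hdiv.
        destruct (S j / k)%nat as [| q] eqn:Eq; [lia |].
        f_equal. apply (Nat.div_unique _ _ _ (k - 1)); lia. }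
      assert (Hsj : INR (S j) = INR k * INR (S (j / k))).
      { rewrite <- mult_INR, <- Hq. f_equal. lia. }
      rewrite Hq. cbn [harmonic]. rewrite Hsj.
      assert (0 < INR k) by (apply lt_0_INR; lia).
      assert (0 < INR (S (j / k))) by apply lt_0_INR, Nat.lt_0_succ.
      field. lra.
    + assert (Hq : (S j / k = j / k)%nat).
      { pose proof (Nat.mod_upper_bound (S j) k ltac:(lia)).
        apply (Nat.div_unique _ _ _ (S j mod k - 1)); lia. }
      rewrite Hq. ring.
Qed.

Lemma hcoef_div (k n j : nat) : (1 <= k)%nat -> (1 <= n)%nat ->
  hcoef k (j / n) = hcoef (k * n) j - hcoef n j.
Proof.
  intros Hk Hn. rewrite !hcoef_harmonic by nia.
  rewrite Nat.Div0.div_div, mult_INR, ln_mult by (apply lt_0_INR; lia).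
  rewrite (Nat.mul_comm n k). ring.
Qed.

Lemma hcoef_abs_le (k j : nat) : (1 <= k)%nat -> (k <= j)%nat ->
  Rabs (hcoef k j) <= 2 * INR k / (INR j + 1).
Proof.
  intros Hk Hkj. rewrite hcoef_harmonic by lia.
  set (q := (j / k)%nat).
  assert (Hq : (1 <= q)%nat) by (apply Nat.div_le_lower_bound; lia).
  assert (Hqj : (k * q <= j /\ j + 1 <= k * q + k)%nat).
  { pose proof (Nat.div_mod_eq j k). pose proof (Nat.mod_upper_bound j k). lia. }
  assert (Hb := harmonic_sub_bounds q (j - q) Hq).
  replace (q + (j - q))%nat with j in Hb by nia.
  destruct Hqj as [Hlo Hhi]. apply le_INR in Hlo, Hhi.
  rewrite mult_INR in Hlo. rewrite !plus_INR, mult_INR in Hhi. simpl (INR 1) in Hhi.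
  set (J := INR j) in *. set (Q := INR q) in *. set (K := INR k) in *.
  assert (HQ : 1 <= Q) by (apply (le_INR 1); exact Hq).
  assert (HK : 1 <= K) by (apply (le_INR 1); exact Hk).
  assert (HJ : 1 <= J) by nra.
  assert (Hup : ln (J / (K * Q)) <= (J - K * Q) / (K * Q))
    by (apply ln_div_bounds; nra).
  assert (Hlow : (J + 1 - K * (Q + 1)) / (J + 1) <= ln ((J + 1) / (K * (Q + 1))))
    by (apply ln_div_bounds; nra).
  rewrite ln_div, ln_mult in Hup, Hlow by nra.
  set (r := 2 * K / (J + 1)).
  assert (Hr : r * (J + 1) = 2 * K) by (unfold r; field; lra).
  assert (Hr0 : 0 < r) by (unfold r; apply Rdiv_lt_0_compat; lra).
  assert (HKQ : J + 1 <= 2 * (K * Q)) by nra.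
  assert (Hup' : (J - K * Q) / (K * Q) <= r) by (apply Rle_div_l; nra).
  assert (Hlow' : - r <= (J + 1 - K * (Q + 1)) / (J + 1)) by (apply Rle_div_r; lra).
  apply Rabs_le. lra.
Qed.

Lemma sum_inv_succ_sq_le (N : nat) :
  sum_f_R0 (fun j => / (INR j + 1) ^ 2) N <= 2 - / (INR N + 1).
Proof.
  induction N as [| N IH].
  - simpl. lra.
  - cbn [sum_f_R0]. rewrite S_INR. pose proof (pos_INR N).
    assert (/ (INR N + 1 + 1) ^ 2 <= / (INR N + 1) - / (INR N + 1 + 1)).
    { replace (/ (INR N + 1) - / (INR N + 1 + 1))
        with (/ ((INR N + 1) * (INR N + 1 + 1))) by (field; lra).
      apply Rinv_le_contravar; nra. }
    lra.
Qed.

Lemma ex_series_inv_succ_sq : ex_series (fun j => / (INR j + 1) ^ 2).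
Proof.
  apply ex_series_Reals_1, growing_cv.
  - intros N. cbn [sum_f_R0]. assert (0 < / (INR (S N) + 1) ^ 2); [| lra].
    apply Rinv_0_lt_compat, pow_lt. pose proof (pos_INR (S N)). lra.
  - exists 2. intros x [N ->]. pose proof (sum_inv_succ_sq_le N).
    assert (0 < / (INR N + 1)) by (apply Rinv_0_lt_compat; pose proof (pos_INR N); lra).
    lra.
Qed.

Lemma inH2_h (k : nat) : (1 <= k)%nat -> inH2 (h k).
Proof.
  intros Hk. unfold inH2, h.
  apply (proj2 (ex_series_incr_n _ k)).
  apply (@ex_series_le R_AbsRing R_CompleteNormedModule _ (fun j => 4 * INR k ^ 2 * / (INR j + 1) ^ 2)).
  - intros j. change (norm ?x) with (Rabs x).
    rewrite Cmod_R, Rabs_pos_eq by apply pow2_ge_0.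
    assert (Hj : 1 <= INR j + 1) by (pose proof (pos_INR j); lra).
    assert (Hkj : INR j + 1 <= INR (k + j) + 1) by (rewrite plus_INR; pose proof (pos_INR k); lra).
    pose proof (hcoef_abs_le k (k + j) Hk ltac:(lia)) as Hb.
    apply Rle_trans with ((2 * INR k / (INR j + 1)) ^ 2).
    + apply pow_incr. split; [apply Rabs_pos |].
      apply Rle_trans with (1 := Hb). unfold Rdiv. apply Rmult_le_compat_l.
      * pose proof (pos_INR k). lra.
      * apply Rinv_le_contravar; lra.
    + right. field. lra.
  - apply (ex_series_scal_l (V := R_NormedModule) (4 * INR k ^ 2)), ex_series_inv_succ_sq.
Qed.

Lemma inH2_zero : inH2 (fun _ => RtoC 0).
Proof.
  exists 0. apply (is_series_ext (fun _ => zero)).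
  - intros j. rewrite Cmod_0, pow_i by lia. reflexivity.
  - eapply filterlim_ext; [intros N; symmetry; apply sum_n_m_const_zero |].
    apply filterlim_const.
Qed.

Lemma inH2_dominated (b a1 a2 : seqC) (c1 c2 : R) :
  (forall j, Cmod (b j) ^ 2 <= c1 * Cmod (a1 j) ^ 2 + c2 * Cmod (a2 j) ^ 2) ->
  inH2 a1 -> inH2 a2 -> inH2 b.
Proof.
  intros Hb Ha1 Ha2.
  apply (@ex_series_le R_AbsRing R_CompleteNormedModule _
           (fun j => c1 * Cmod (a1 j) ^ 2 + c2 * Cmod (a2 j) ^ 2)).
  - intros j. change (norm ?x) with (Rabs x).
    rewrite Rabs_pos_eq by apply pow2_ge_0. apply Hb.
  - apply (ex_series_plus (V := R_NormedModule));
      apply (ex_series_scal_l (V := R_NormedModule)); assumption.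
Qed.

Lemma inH2_add (a b : seqC) : inH2 a -> inH2 b -> inH2 (fun j => Cplus (a j) (b j)).
Proof.
  apply inH2_dominated with (c1 := 2) (c2 := 2). intros j.
  rewrite !Cmod2_alt. destruct (a j) as [x1 x2], (b j) as [y1 y2]. simpl.
  pose proof (pow2_ge_0 (x1 - y1)). pose proof (pow2_ge_0 (x2 - y2)).
  pose proof (pow2_ge_0 (x1 + y1)). pose proof (pow2_ge_0 (x2 + y2)). nra.
Qed.

Lemma inH2_sub (a b : seqC) : inH2 a -> inH2 b -> inH2 (fun j => Cminus (a j) (b j)).
Proof.
  apply inH2_dominated with (c1 := 2) (c2 := 2). intros j.
  rewrite !Cmod2_alt. destruct (a j) as [x1 x2], (b j) as [y1 y2]. simpl.
  pose proof (pow2_ge_0 (x1 - y1)). pose proof (pow2_ge_0 (x2 - y2)).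
  pose proof (pow2_ge_0 (x1 + y1)). pose proof (pow2_ge_0 (x2 + y2)). nra.
Qed.

Lemma inH2_scal (c : C) (a : seqC) : inH2 a -> inH2 (fun j => Cmult c (a j)).
Proof.
  intros Ha. apply (inH2_dominated _ a a (Cmod c ^ 2) 0); auto.
  intros j. rewrite Cmod_mult, Rpow_mult_distr. lra.
Qed.

Lemma inH2_csum (N : nat) (F : nat -> seqC) :
  (forall i, (i < N)%nat -> inH2 (F i)) -> inH2 (fun j => csum N (fun i => F i j)).
Proof.
  induction N as [| N IH]; intros HF; simpl.
  - exact inH2_zero.
  - apply inH2_add; [apply IH; auto |]. apply HF. lia.
Qed.

Lemma inM_inH2 (g : seqC) : inM g -> inH2 g.
Proof.
  intros (N & ks & ls & c & Hkl & ->).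
  apply (inH2_csum N (fun i j => Cmult (c i) (Cminus (h (ks i) j) (h (ls i) j)))).
  intros i Hi. destruct (Hkl i Hi).
  apply inH2_scal, inH2_sub; apply inH2_h; lia.
Qed.

Lemma csum_ext (N : nat) (F G : nat -> C) :
  (forall i, (i < N)%nat -> F i = G i) -> csum N F = csum N G.
Proof.
  induction N as [| N IH]; intros H; simpl; [reflexivity |].
  rewrite IH, H; auto.
Qed.

Lemma Wn_h (n k : nat) : (1 <= n)%nat -> (1 <= k)%nat ->
  Wn n (h k) = fun j => Cminus (h (k * n) j) (h n j).
Proof.
  intros Hn Hk. apply functional_extensionality. intros j.
  unfold Wn, h. rewrite hcoef_div by assumption. apply RtoC_minus.
Qed.

Lemma Wn_inM (n : nat) (g : seqC) : (1 <= n)%nat -> inM g -> inM (Wn n g).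
Proof.
  intros Hn (N & ks & ls & c & Hkl & ->).
  exists N, (fun i => ks i * n)%nat, (fun i => ls i * n)%nat, c. split.
  - intros i Hi. destruct (Hkl i Hi). nia.
  - apply functional_extensionality. intros j. apply csum_ext. intros i Hi.
    destruct (Hkl i Hi).
    change (h (ks i) (j / n)%nat) with (Wn n (h (ks i)) j).
    change (h (ls i) (j / n)%nat) with (Wn n (h (ls i)) j).
    rewrite !Wn_h by lia. f_equal. ring.
Qed.

Lemma inM_h_sub (k l : nat) : (2 <= k)%nat -> (2 <= l)%nat ->
  inM (fun j => Cminus (h k j) (h l j)).
Proof.
  intros Hk Hl. exists 1%nat, (fun _ => k), (fun _ => l), (fun _ => RtoC 1). split.
  - intros i _. split; assumption.
  - apply functional_extensionality. intros j. simpl. ring.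
Qed.

Lemma h_0 (k : nat) : h k 0%nat = RtoC (- ln (INR k)).
Proof. reflexivity. Qed.

Lemma Series_nonneg (u : nat -> R) : ex_series u -> (forall n, 0 <= u n) -> 0 <= Series u.
Proof.
  intros Hu Hpos. rewrite <- (Rmult_0_l (Series u)), <- Series_scal_l.
  apply Series_le; [| exact Hu]. intros n. specialize (Hpos n). lra.
Qed.

Lemma normsq_nonneg (a : seqC) : inH2 a -> 0 <= normsq a.
Proof. intros Ha. apply Series_nonneg; [exact Ha | intros; apply pow2_ge_0]. Qed.

Lemma normsq_ge_head (a : seqC) : inH2 a -> Cmod (a 0%nat) ^ 2 <= normsq a.
Proof.
  intros Ha. unfold normsq. rewrite Series_incr_1 by exact Ha.
  assert (0 <= Series (fun j => Cmod (a (S j)) ^ 2)); [| lra].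
  apply Series_nonneg; [apply (proj1 (ex_series_incr_1 (V := R_NormedModule) (fun j => Cmod (a j) ^ 2))), Ha |].
  intros; apply pow2_ge_0.
Qed.

Lemma normsq_sub (x y : seqC) : inH2 x -> inH2 y ->
  normsq (fun j => Cminus (x j) (y j)) = normsq x + normsq y - 2 * Re (ip x y).
Proof.
  intros Hx Hy. unfold normsq, ip, inH2 in *. simpl (Re _).
  assert (Hxy : ex_series (fun j => Re (Cmult (x j) (Cconj (y j))))).
  { apply (@ex_series_le R_AbsRing R_CompleteNormedModule _
             (fun j => / 2 * Cmod (x j) ^ 2 + / 2 * Cmod (y j) ^ 2)).
    - intros j. change (norm ?r) with (Rabs r). rewrite !Cmod2_alt.
      destruct (x j) as [x1 x2], (y j) as [y1 y2]. simpl.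
      pose proof (pow2_ge_0 (x1 - y1)). pose proof (pow2_ge_0 (x2 - y2)).
      pose proof (pow2_ge_0 (x1 + y1)). pose proof (pow2_ge_0 (x2 + y2)).
      apply Rabs_le. split; nra.
    - apply (ex_series_plus (V := R_NormedModule));
        apply (ex_series_scal_l (V := R_NormedModule)); assumption. }
  rewrite <- Series_scal_l, <- Series_plus, <- Series_minus by
    first [assumption | apply (ex_series_scal_l (V := R_NormedModule)); assumption
          | apply (ex_series_plus (V := R_NormedModule)); assumption].
  apply Series_ext. intros j. rewrite !Cmod2_alt.
  destruct (x j) as [x1 x2], (y j) as [y1 y2]. simpl. ring.
Qed.

Definition orthogonal_to (P : seqC -> Prop) (f : seqC) : Prop :=
  inH2 f /\ forall g, P g -> ip f g = RtoC 0.

Section AdjointInvariance.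

Variables (T S : seqC -> seqC) (P : seqC -> Prop).
Hypothesis S_H2 : preserves_H2 S.
Hypothesis S_adjoint : is_adjoint_of T S.
Hypothesis P_H2 : forall g, P g -> inH2 g.
Hypothesis T_P : forall g, P g -> P (T g).

Lemma orthogonal_to_iter_adjoint (m : nat) (f : seqC) :
  orthogonal_to P f -> orthogonal_to P (Nat.iter m S f).
Proof.
  intros Hf. induction m as [| m [Hx Hx0]]; [exact Hf |]. split.
  - apply S_H2, Hx.
  - intros g Hg. simpl. rewrite S_adjoint by auto. apply Hx0, T_P, Hg.
Qed.

End AdjointInvariance.

Lemma not_hypercyclic_orthogonal_orbit (S : seqC -> seqC) (P : seqC -> Prop) (f y : seqC) :
  P y -> inH2 y -> 0 < normsq y ->
  (forall m, orthogonal_to P (Nat.iter m S f)) -> ~ hypercyclic S f.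
Proof.
  intros HPy Hy Hy0 Horth [_ Hdense].
  destruct (Hdense y Hy (normsq y) Hy0) as [m Hm].
  destruct (Horth m) as [Hx Hxy].
  rewrite normsq_sub, (Hxy y HPy) in Hm by assumption.
  pose proof (normsq_nonneg _ Hx). simpl in Hm. lra.
Qed.

Theorem mainTheorem19 :
  forall (n : nat), (2 <= n)%nat ->
  forall (Wstar : seqC -> seqC),
    preserves_H2 Wstar -> is_adjoint_of (Wn n) Wstar ->
  forall f : seqC, inMperp f -> ~ hypercyclic Wstar f.
Proof.
  intros n Hn Wstar Wstar_H2 Wstar_adj f Hf.
  set (y := fun j => Cminus (h 2 j) (h 3 j)).
  assert (HyM : inM y) by (apply inM_h_sub; lia).
  apply (not_hypercyclic_orthogonal_orbit Wstar inM f y HyM).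
  - apply inM_inH2, HyM.
  - eapply Rlt_le_trans; [| apply normsq_ge_head, inM_inH2, HyM].
    unfold y. rewrite !h_0, <- RtoC_minus, Cmod_R.
    assert (ln (INR 2) < ln (INR 3)) by (apply ln_increasing; simpl; lra).
    apply pow_lt, Rabs_pos_lt. lra.
  - intros m.
    apply (orthogonal_to_iter_adjoint (Wn n) Wstar inM Wstar_H2 Wstar_adj inM_inH2);
      [intros g; apply Wn_inM; lia | exact Hf].
Qed.
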